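(* Let $F_{ij}$ be a dual-convex $m\times n$ net in $I^3$ that has a reciprocal-parallel net $C_{kl}$. Then the planar net obtained from the top view $\overline{C_{kl}}$ by a rotation through $\pi/2$ is Christoffel dual to the top view $\overline{p^*_{kl}}$ of the metric dual net of $F_{ij}$.
   Context: $I^3$ is $\mathbb{R}^3$ with coordinates $(x,y,z)$; isotropic = parallel to the $z$-axis; top view of $(x,y,z)$ is $(x,y)$. Metric duality: non-isotropic plane $z=P^1x+P^2y-P^3$ $\leftrightarrow$ point $(P^1,P^2,P^3)$. An $m\times n$ net: points $F_{ij}$, $0\le i\le m,0\le j\le n$, with $F_{ij},F_{i+1,j},F_{i+1,j+1},F_{i,j+1}$ consecutive vertices of a convex planar quadrilateral (face $p_{ij}$) for all $0\le i<m,0\le j<n$. Boundary vertices: $i\in\{0,m\}$ or $j\in\{0,n\}$; consecutive faces around non-boundary $F_{ij}$: $p_{i-1,j-1},p_{i,j-1},p_{ij},p_{i-1,j}$. Convex 4-hedral angle with vertex $O$: union of rays from $O$ meeting a convex quadrilateral in a plane not through $O$; flat angles: rays through one side; admissible: isotropic line through $O$ meets its interior. Dual-convex: $m,n\ge2$ and at each non-boundary vertex the four consecutive face planes are planes of four consecutive flat angles of an admissible convex 4-hedral angle. Metric dual: the $(m-1)\times(n-1)$ net of points $p^*_{kl}$. A collection $C_{kl}$, $0\le k<m,0\le l<n$, not all equal, is reciprocal-parallel to $F_{ij}$ if $C_{i,j-1}C_{ij}\parallel F_{i+1,j}F_{ij}$ for all $0\le i<m,0<j<n$ and $C_{i-1,j}C_{ij}\parallel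 F_{i,j+1}F_{ij}$ for all $0<i<m,0\le j<n$. Labeled quadrilaterals $ABCD$, $A'B'C'D'$ are dual if $AB\parallel A'B'$, $BC\parallel B'C'$, $CD\parallel C'D'$, $DA\parallel D'A'$, $AC\parallel B'D'$, $BD\parallel A'C'$; two nets are Christoffel dual if corresponding faces are dual. *)

From HB Require Import structures.
From mathcomp Require Import all_boot all_order all_algebra.
From mathcomp Require Import reals.

Set Implicit Arguments.
Unset Strict Implicit.
Unset Printing Implicit Defensive.

Import Order.TTheory GRing.Theory Num.Theory.
Local Open Scope ring_scope.

(* Points of I^3 = R^3 (coordinates x, y, z; z is the isotropic direction). *)
Record P3 (R : Type) := mkP3 { p3x : R; p3y : R; p3z : R }.
Record P2 (R : Type) := mkP2 { p2x : R; p2y : R }.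

Section Defs.
Variable R : realType.

Definition add3 (a b : P3 R) : P3 R :=
  mkP3 (p3x a + p3x b) (p3y a + p3y b) (p3z a + p3z b).
Definition sub3 (a b : P3 R) : P3 R :=
  mkP3 (p3x a - p3x b) (p3y a - p3y b) (p3z a - p3z b).
Definition scale3 (s : R) (a : P3 R) : P3 R :=
  mkP3 (s * p3x a) (s * p3y a) (s * p3z a).
Definition cross3 (u v : P3 R) : P3 R :=
  mkP3 (p3y u * p3z v - p3z u * p3y v)
       (p3z u * p3x v - p3x u * p3z v)
       (p3x u * p3y v - p3y u * p3x v).
Definition dot3 (u v : P3 R) : R :=
  p3x u * p3x v + p3y u * p3y v + p3z u * p3z v.

(* Parallel vectors (a zero vector counts as parallel to everything). *)
Definition par3 (u v : P3 R) : Prop := cross3 u v = mkP3 0 0 0.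

(* X lies in the plane through A, B, C (for A, B, C non-collinear). *)
Definition plane3 (A B C : P3 R) (X : P3 R) : Prop :=
  dot3 (cross3 (sub3 B A) (sub3 C A)) (sub3 X A) = 0.

Definition same_set (P Q : P3 R -> Prop) : Prop := forall X, P X <-> Q X.

(* ABCD (consecutive vertices) is a convex planar (non-degenerate)
   quadrilateral: A, B, C not collinear and the diagonals AC and BD meet at
   an interior point of both. *)
Definition convex_quad (A B C D : P3 R) : Prop :=
  ~ par3 (sub3 B A) (sub3 C A) /\
  exists s t : R, 0 < s /\ s < 1 /\ 0 < t /\ t < 1 /\
    add3 A (scale3 s (sub3 C A)) = add3 B (scale3 t (sub3 D B)).

(* m x n net: F i j for 0 <= i <= m, 0 <= j <= n. *)
Definition is_net (m n : nat) (F : nat -> nat -> P3 R) : Prop :=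
  forall i j, (i < m)%N -> (j < n)%N ->
    convex_quad (F i j) (F i.+1 j) (F i.+1 j.+1) (F i j.+1).

Definition face_plane (F : nat -> nat -> P3 R) (i j : nat) : P3 R -> Prop :=
  plane3 (F i j) (F i.+1 j) (F i.+1 j.+1).

Definition quad_interior (Q1 Q2 Q3 Q4 X : P3 R) : Prop :=
  exists l1 l2 l3 l4 : R, 0 < l1 /\ 0 < l2 /\ 0 < l3 /\ 0 < l4 /\
    l1 + l2 + l3 + l4 = 1 /\
    X = add3 (add3 (scale3 l1 Q1) (scale3 l2 Q2))
             (add3 (scale3 l3 Q3) (scale3 l4 Q4)).

Definition angle_interior (O Q1 Q2 Q3 Q4 X : P3 R) : Prop :=
  exists (q : P3 R) (lam : R), 0 < lam /\ quad_interior Q1 Q2 Q3 Q4 q /\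
    X = add3 O (scale3 lam (sub3 q O)).

(* Q1Q2Q3Q4 is a convex quadrilateral in a plane not through O, and the
   isotropic line through O meets the interior of the resulting angle. *)
Definition admissible_angle (O Q1 Q2 Q3 Q4 : P3 R) : Prop :=
  convex_quad Q1 Q2 Q3 Q4 /\ ~ plane3 Q1 Q2 Q3 O /\
  exists X, angle_interior O Q1 Q2 Q3 Q4 X /\ p3x X = p3x O /\ p3y X = p3y O.

(* Dual-convexity of an m x n net F. The flat angles of the angle are
   spanned by O and the sides Q1Q2, Q2Q3, Q3Q4, Q4Q1. *)
Definition dual_convex (m n : nat) (F : nat -> nat -> P3 R) : Prop :=
  (2 <= m)%N /\ (2 <= n)%N /\
  forall i j, (0 < i)%N -> (i < m)%N -> (0 < j)%N -> (j < n)%N ->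
    exists Q1 Q2 Q3 Q4 : P3 R,
      admissible_angle (F i j) Q1 Q2 Q3 Q4 /\
      same_set (plane3 (F i j) Q1 Q2) (face_plane F i.-1 j.-1) /\
      same_set (plane3 (F i j) Q2 Q3) (face_plane F i j.-1) /\
      same_set (plane3 (F i j) Q3 Q4) (face_plane F i j) /\
      same_set (plane3 (F i j) Q4 Q1) (face_plane F i.-1 j).

(* Metric duality: the point P corresponds to the plane z = P1 x + P2 y - P3. *)
Definition on_dual_plane (P X : P3 R) : Prop :=
  p3z X = p3x P * p3x X + p3y P * p3y X - p3z P.

Definition is_metric_dual (m n : nat) (F Pst : nat -> nat -> P3 R) : Prop :=
  forall k l, (k < m)%N -> (l < n)%N ->
    on_dual_plane (Pst k l) (F k l) /\ on_dual_plane (Pst k l) (F k.+1 l) /\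
    on_dual_plane (Pst k l) (F k.+1 l.+1) /\ on_dual_plane (Pst k l) (F k l.+1).

Definition reciprocal_parallel (m n : nat) (F C : nat -> nat -> P3 R) : Prop :=
  (exists k l k' l', (k < m)%N /\ (l < n)%N /\ (k' < m)%N /\ (l' < n)%N /\
     C k l <> C k' l') /\
  (forall i j, (i < m)%N -> (0 < j)%N -> (j < n)%N ->
     par3 (sub3 (C i j) (C i j.-1)) (sub3 (F i.+1 j) (F i j))) /\
  (forall i j, (0 < i)%N -> (i < m)%N -> (j < n)%N ->
     par3 (sub3 (C i j) (C i.-1 j)) (sub3 (F i j.+1) (F i j))).

Definition top (X : P3 R) : P2 R := mkP2 (p3x X) (p3y X).
Definition rot90 (p : P2 R) : P2 R := mkP2 (- p2y p) (p2x p).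
Definition sub2 (a b : P2 R) : P2 R := mkP2 (p2x a - p2x b) (p2y a - p2y b).
Definition par2 (u v : P2 R) : Prop := p2x u * p2y v - p2y u * p2x v = 0.

Definition dual_quads (A B C D A' B' C' D' : P2 R) : Prop :=
  par2 (sub2 B A) (sub2 B' A') /\ par2 (sub2 C B) (sub2 C' B') /\
  par2 (sub2 D C) (sub2 D' C') /\ par2 (sub2 A D) (sub2 A' D') /\
  par2 (sub2 C A) (sub2 D' B') /\ par2 (sub2 D B) (sub2 C' A').

Definition christoffel_dual (m n : nat) (G H : nat -> nat -> P2 R) : Prop :=
  forall k l, (k < m)%N -> (l < n)%N ->
    dual_quads (G k l) (G k.+1 l) (G k.+1 l.+1) (G k l.+1)
               (H k l) (H k.+1 l) (H k.+1 l.+1) (H k l.+1).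

End Defs.

(* The dual point P = p*_kl defines the linear form
   h_P(w) = w_z - P_x w_x - P_y w_y ([dual_height P]), which vanishes on every
   vector parallel to the plane of the face p_kl.  Each edge of C is parallel to the edge of F
   shared by two adjacent faces, so h_P and h_Q vanish on it for both of their
   dual points P, Q.  The difference h_P - h_Q only involves the top view, so
   the top view of the edge is orthogonal to top(Q) - top(P); after a rotation
   through pi/2 the two are parallel.  Each diagonal of a face of C is the sum
   of two edges on which the same pair of forms vanishes. *)
From mathcomp Require Import all_boot all_order all_algebra.
From mathcomp Require Import reals.
From mathcomp Require Import ring lra.

Set Implicit Arguments.
Unset Strict Implicit.
Unset Printing Implicit Defensive.
Import Order.TTheory GRing.Theory Num.Theory.
Local Open Scope ring_scope.

Local Notation zero3 := (mkP3 0 0 0).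

Section Vectors.
Variable R : realType.
Implicit Types (a : R) (u w e N A B X Y P Q : P3 R).

Lemma scale3_eq0 a u : scale3 a u = zero3 -> a = 0 \/ u = zero3.
Proof.
case: u => x y z [hx hy hz]; have [-> | a0] := eqVneq a 0; [by left | right].
rewrite -(mulr0 a) in hx hy hz.
by rewrite (mulfI a0 hx) (mulfI a0 hy) (mulfI a0 hz).
Qed.

Lemma sub3_eq0 X Y : sub3 X Y = zero3 -> X = Y.
Proof.
by case: X Y => ? ? ? [? ? ?] [/subr0_eq -> /subr0_eq -> /subr0_eq ->].
Qed.

Lemma dot3_sub N X Y : dot3 N (sub3 X Y) = dot3 N X - dot3 N Y.
Proof. by rewrite /dot3 /=; ring. Qed.

Lemma convex_quad_neq A B X Y : convex_quad A B X Y -> B <> A /\ X <> B.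
Proof.
case=> ncol _; split=> E; apply: ncol; rewrite E /par3 /cross3;
  by case: A B X {E} => ? ? ? [? ? ?] [? ? ?] /=; congr mkP3; ring.
Qed.

Lemma cross3_cross3 N w e :
  cross3 N (cross3 w e) = sub3 (scale3 (dot3 N e) w) (scale3 (dot3 N w) e).
Proof.
case: N w e => ? ? ? [? ? ?] [? ? ?].
by rewrite /cross3 /dot3 /sub3 /scale3 /=; congr mkP3; ring.
Qed.

Lemma par3_scale_dot3 N w e :
  par3 w e -> dot3 N e = 0 -> scale3 (dot3 N w) e = zero3.
Proof.
move=> we Ne; have := cross3_cross3 N w e; rewrite we Ne.
case: (scale3 _ e) => ? ? ?; rewrite /cross3 /sub3 /scale3 /= => -[? ? ?].
by congr mkP3; lra.
Qed.

Lemma dot3_eq_of_par3 N X Y A B :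
  par3 (sub3 Y X) (sub3 B A) -> B <> A -> dot3 N A = dot3 N B ->
  dot3 N X = dot3 N Y.
Proof.
move=> par neqBA eqNAB.
have NBA : dot3 N (sub3 B A) = 0 by rewrite dot3_sub eqNAB subrr.
case/scale3_eq0: (par3_scale_dot3 par NBA) => [|/sub3_eq0 //].
by rewrite dot3_sub => /subr0_eq.
Qed.

Definition dual_height P X : R := dot3 (mkP3 (- p3x P) (- p3y P) 1) X.

Lemma dual_height_on_dual_plane P X :
  on_dual_plane P X -> dual_height P X = - p3z P.
Proof. by rewrite /on_dual_plane /dual_height /dot3 /= => ->; ring. Qed.

Lemma dual_height_eq_of_par3 P X Y A B :
  par3 (sub3 Y X) (sub3 B A) -> B <> A ->
  on_dual_plane P A -> on_dual_plane P B ->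
  dual_height P X = dual_height P Y.
Proof.
move=> par neqBA /dual_height_on_dual_plane PA /dual_height_on_dual_plane PB.
exact: dot3_eq_of_par3 par neqBA (etrans PA (esym PB)).
Qed.

(* dual_height P - dual_height Q is the form (Q_x - P_x) w_x + (Q_y - P_y) w_y on the top view. *)
Lemma par2_rot90_top P Q X Y :
  dual_height P X = dual_height P Y -> dual_height Q X = dual_height Q Y ->
  par2 (sub2 (rot90 (top Y)) (rot90 (top X))) (sub2 (top Q) (top P)).
Proof.
case: P Q X Y => ? ? ? [? ? ?] [? ? ?] [? ? ?].
by rewrite /dual_height /dot3 /par2 /=; lra.
Qed.

End Vectors.

Section ReciprocalParallelNet.
Variables (R : realType) (m n : nat) (F C Pst : nat -> nat -> P3 R).
Hypothesis netF : is_net m n F.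
Hypothesis dualP : is_metric_dual m n F Pst.
Hypothesis parC_row : forall i j, (i < m)%N -> (0 < j)%N -> (j < n)%N ->
  par3 (sub3 (C i j) (C i j.-1)) (sub3 (F i.+1 j) (F i j)).
Hypothesis parC_col : forall i j, (0 < i)%N -> (i < m)%N -> (j < n)%N ->
  par3 (sub3 (C i j) (C i.-1 j)) (sub3 (F i j.+1) (F i j)).

Lemma dual_height_C_next_l k l : (k < m)%N -> (l.+1 < n)%N ->
  dual_height (Pst k l) (C k l) = dual_height (Pst k l) (C k l.+1) /\
  dual_height (Pst k l.+1) (C k l) = dual_height (Pst k l.+1) (C k l.+1).
Proof.
move=> hk hl; have par := parC_row hk (ltn0Sn l) hl.
have [neq _] := convex_quad_neq (netF hk hl).
have [_ [_ [? ?]]] := dualP hk (ltnW hl).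
have [? [? _]] := dualP hk hl.
by split; apply: dual_height_eq_of_par3 par neq _ _.
Qed.

Lemma dual_height_C_next_k k l : (k.+1 < m)%N -> (l < n)%N ->
  dual_height (Pst k l) (C k l) = dual_height (Pst k l) (C k.+1 l) /\
  dual_height (Pst k.+1 l) (C k l) = dual_height (Pst k.+1 l) (C k.+1 l).
Proof.
move=> hk hl; have par := parC_col (ltn0Sn k) hk hl.
have [_ neq] := convex_quad_neq (netF (ltnW hk) hl).
have [_ [? [? _]]] := dualP (ltnW hk) hl.
have [? [_ [_ ?]]] := dualP hk hl.
by split; apply: dual_height_eq_of_par3 par neq _ _.
Qed.

Lemma dual_quads_C_Pst k l : (k.+1 < m)%N -> (l.+1 < n)%N ->
  dual_quads (rot90 (top (C k l))) (rot90 (top (C k.+1 l)))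
             (rot90 (top (C k.+1 l.+1))) (rot90 (top (C k l.+1)))
             (top (Pst k l)) (top (Pst k.+1 l))
             (top (Pst k.+1 l.+1)) (top (Pst k l.+1)).
Proof.
move=> hk hl.
have [? ?] := dual_height_C_next_k hk (ltnW hl).
have [? ?] := dual_height_C_next_k hk hl.
have [? ?] := dual_height_C_next_l (ltnW hk) hl.
have [? ?] := dual_height_C_next_l hk hl.
by split; [|split; [|split; [|split; [|split]]]]; apply: par2_rot90_top;
  congruence.
Qed.

End ReciprocalParallelNet.

Theorem corollary1 (R : realType) (m n : nat) (F C Pst : nat -> nat -> P3 R) :
  is_net m n F ->
  dual_convex m n F ->
  reciprocal_parallel m n F C ->
  is_metric_dual m n F Pst ->
  christoffel_dual m.-1 n.-1 (fun k l => rot90 (top (C k l)))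
                             (fun k l => top (Pst k l)).
Proof.
move=> netF _ [_ [parC_row parC_col]] dualP k l.
rewrite !ltn_predRL; exact: (dual_quads_C_Pst netF dualP parC_row parC_col).
Qed.
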